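(* Let $a_1,\dots,a_n\in\mathbb{F}$ and $r_1,\dots,r_n\in\mathbb{Z}_+$ be such that $\Omega=\{(x-a_1)^{r_1},\dots,(x-a_n)^{r_n}\}\subseteq\mathbb{F}[x;\sigma,\delta]$ has size $n$. (1) If $\Omega$ is P-independent, then so is $\{(x-a_1)^{s_1},\dots,(x-a_n)^{s_n}\}$ for all $s_1,\dots,s_n\in\mathbb{Z}_+$ with $s_i\le r_i$ for all $i$. (2) If $\Omega$ is P-independent, then the set $\{a_1,\dots,a_n\}\subseteq\mathbb{F}$ has size $n$ and is P-independent.
   Context: Let $\mathbb{F}$ be a division ring, $\sigma$ a ring endomorphism of $\mathbb{F}$ and $\delta$ a $\sigma$-derivation; $\mathbb{F}[x;\sigma,\delta]$ is the skew polynomial ring with $xa=\sigma(a)x+\delta(a)$ (a domain with right Euclidean division). For a set $\Omega$ of skew polynomials, $I(\Omega)$ is the left ideal of skew polynomials right-divisible by every element of $\Omega$, $F_\Omega$ its monic generator of minimal degree (or $0$ if $I(\Omega)=\{0\}$). $\Omega$ is P-independent if it is finite, $I(\Omega)\ne\{0\}$ and $\deg F_\Omega=\sum_{P\in\Omega}\deg P$. A finite set $\{b_1,\dots,b_k\}\subseteq\mathbb{F}$ of distinct elements is P-independent if $\{x-b_1,\dots,x-b_k\}$ is. *)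

(* Skew polynomial ring F[x; sigma, delta] over a division ring F,
   represented on the coefficient sequences {poly F} (additive structure of
   {poly F}), with its own skew multiplication [skmul]. *)
From HB Require Import structures.
From mathcomp Require Import all_boot all_order all_algebra.
From mathcomp Require Import finmap.
Set Implicit Arguments.
Unset Strict Implicit.
Unset Printing Implicit Defensive.
Import Order.TTheory GRing.Theory.
Local Open Scope ring_scope.


Section Skew.
Variable F : unitRingType.
Variables (sigma delta : F -> F).

Definition is_division_ring := forall a : F, a != 0 -> a \is a GRing.unit.

Definition is_sigma_derivation :=
  (forall a b : F, delta (a + b) = delta a + delta b) /\
  (forall a b : F, delta (a * b) = sigma a * delta b + delta a * b).

(* left multiplication by x:  x * (sum a_i x^i) = sum (sigma(a_i) x + delta(a_i)) x^i *)
Definition skX (p : {poly F}) : {poly F} :=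
  map_poly sigma p * 'X + map_poly delta p.

Definition skmul (p q : {poly F}) : {poly F} :=
  \sum_(i < size p) p`_i *: iter i skX q.

Definition skexp (p : {poly F}) (n : nat) : {poly F} := iter n (skmul p) 1.

Definition skrdvd (P Q : {poly F}) : Prop := exists R, Q = skmul R P.

Definition inI (Om : {fset {poly F}}) (Q : {poly F}) : Prop :=
  forall P, P \in Om -> skrdvd P Q.

Definition is_F_Omega (Om : {fset {poly F}}) (G : {poly F}) : Prop :=
  [/\ G \is monic, inI Om G & forall Q, Q != 0 -> inI Om Q -> (size G <= size Q)%N].

Definition Pindependent (Om : {fset {poly F}}) : Prop :=
  (exists Q, Q != 0 /\ inI Om Q) /\
  exists G, is_F_Omega Om G /\ (size G).-1 = (\sum_(P <- Om) (size P).-1)%N.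

Definition Pindependent_elts (B : {fset F}) : Prop :=
  Pindependent [fset ('X - b%:P) | b in B]%fset.

End Skew.

From HB Require Import structures.
From mathcomp Require Import all_boot all_order all_algebra.
From mathcomp Require Import finmap.
From mathcomp Require Import zify.
Set Implicit Arguments.
Unset Strict Implicit.
Unset Printing Implicit Defensive.
Import GRing.Theory.
Local Open Scope ring_scope.

(* The proof rests on the following facts.
   - [skmul] is associative and, sigma being injective, degrees add under it.
   - Right division by a monic polynomial T, plus a dimension count (any
     deg T + 1 polynomials of degree < deg T are left F-linearly dependent), gives
     a left Ore condition: R * U = S * T with R <> 0 and deg R <= deg T.  Iterating,
     every finite monic family has a nonzero common left multiple of degree at most
     the sum of the degrees.
   - Hence, for a monic family T without repetitions, P-independence is equivalent
     to the lower bound "every nonzero common left multiple has degree >= sum of the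
     degrees" ([cmult_lower_bound]); the lower bound passes from products V_i * W_i
     to the right factors W_i, and it forbids repeated members of positive degree.
   Part (1) follows by writing (x - a_i)^(r_i) = (x - a_i)^(r_i - s_i) (x - a_i)^(s_i);
   part (2) is the case s_i = 1, where injectivity of i |-> x - a_i makes the a_i
   distinct. *)

Section FsetOfOrdinals.
Local Open Scope fset_scope.
Variables (n : nat) (T : choiceType) (f : 'I_n -> T).

Lemma imfset_ord : [fset f i | i : 'I_n] = f @` [fset i | i : 'I_n].
Proof. by rewrite -imfset_comp. Qed.

Lemma card_fset_ord : #|` [fset i | i : 'I_n]| = n.
Proof.
rewrite card_imfset //= -[RHS]size_enum_ord; apply: perm_size.
by apply: uniq_perm; rewrite ?enum_finmem_uniq ?enum_uniq // => x; rewrite enum_finmemE mem_enum.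
Qed.

Lemma card_imfset_ord_inj : #|` [fset f i | i : 'I_n]| = n -> injective f.
Proof.
rewrite imfset_ord => hcard.
have /card_in_imfsetP finj : #|` f @` [fset i | i : 'I_n]| == #|` [fset i | i : 'I_n]|.
  by rewrite hcard card_fset_ord.
by move=> x y fxy; apply: finj; rewrite // in_imfset.
Qed.

Lemma inj_card_imfset_ord : injective f -> #|` [fset f i | i : 'I_n]| = n.
Proof. by move=> finj; rewrite imfset_ord card_in_imfset ?card_fset_ord // => x y _ _ /finj. Qed.

Lemma sum_imfset_ord (g : T -> nat) : injective f ->
  (\sum_(P <- [fset f i | i : 'I_n]) g P = \sum_i g (f i))%N.
Proof.
move=> finj; rewrite big_imfset /=; last by move=> x y _ _ /finj.
apply: perm_big; apply: uniq_perm; rewrite ?enum_finmem_uniq ?index_enum_uniq ?enum_uniq // => x.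
by rewrite mem_enum mem_index_enum.
Qed.

End FsetOfOrdinals.

Section SkewPolynomials.
Variable F : unitRingType.
Hypothesis hF : is_division_ring F.
Variable sigma : {rmorphism F -> F}.
Variable delta : F -> F.
Hypothesis hdelta : is_sigma_derivation sigma delta.

Implicit Types (p q s : {poly F}) (a b c : F).

Local Notation sX := (skX sigma delta).
Local Notation sm := (skmul sigma delta).
Local Notation skexp := (skexp sigma delta).
Local Notation skrdvd := (skrdvd sigma delta).

Lemma deltaD a b : delta (a + b) = delta a + delta b. Proof. by case: hdelta. Qed.
Lemma deltaM a b : delta (a * b) = sigma a * delta b + delta a * b. Proof. by case: hdelta. Qed.

Lemma delta0 : delta 0 = 0.
Proof. by apply: (addrI (delta 0)); rewrite addr0 -deltaD addr0. Qed.

Lemma delta1 : delta 1 = 0.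
Proof.
have h := deltaM 1 1; rewrite rmorph1 !mul1r mulr1 in h.
by apply: (addrI (delta 1)); rewrite addr0 -h.
Qed.

Lemma coef_skX p k : (sX p)`_k = (if k is k'.+1 then sigma p`_k' else 0) + delta p`_k.
Proof. by rewrite /skX coefD coefMX !coef_map_id0 ?delta0 ?rmorph0 //; case: k. Qed.

Lemma skX0 : sX 0 = 0.
Proof. by apply/polyP => -[|k]; rewrite coef_skX !coef0 delta0 ?rmorph0 addr0. Qed.

Lemma skXD p q : sX (p + q) = sX p + sX q.
Proof.
apply/polyP => k; rewrite coefD !coef_skX coefD deltaD.
by case: k => [|k]; rewrite ?coefD ?rmorphD ?add0r // addrACA.
Qed.

Lemma skXZ c p : sX (c *: p) = sigma c *: sX p + delta c *: p.
Proof.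
apply/polyP => k; rewrite coef_skX [RHS]coefD.
by case: k => [|k]; rewrite !coefZ coef_skX deltaM mulrDr addrA ?rmorphM ?mulr0 ?add0r.
Qed.

Lemma skX_sum I (r : seq I) (P : pred I) (f : I -> {poly F}) :
  sX (\sum_(i <- r | P i) f i) = \sum_(i <- r | P i) sX (f i).
Proof. exact: (big_morph _ skXD skX0). Qed.

Lemma skX_Xn i : sX ('X^i : {poly F}) = 'X^(i.+1).
Proof.
apply/polyP => k; rewrite coef_skX !coefXn.
have -> : delta (k == i)%:R = 0 by case: eqP; rewrite ?delta0 ?delta1.
by case: k => [|k]; rewrite addr0 // coefXn eqSS; case: eqP; rewrite ?rmorph0 ?rmorph1.
Qed.

Lemma size_skX_leq p : (size (sX p) <= (size p).+1)%N.
Proof.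
apply/leq_sizeP => -[//|j] hj; rewrite coef_skX.
by rewrite !nth_default ?rmorph0 ?delta0 ?addr0 // ltnW.
Qed.

Lemma skmulE_bound N p q : (size p <= N)%N -> sm p q = \sum_(i < N) p`_i *: iter i sX q.
Proof.
move=> hN; rewrite /skmul (big_ord_widen N (fun i => p`_i *: iter i sX q) hN) big_mkcond /=.
by apply: eq_bigr => i _; case: ltnP => // h; rewrite nth_default // scale0r.
Qed.

Lemma skmul0l q : sm 0 q = 0.
Proof. by rewrite /skmul size_poly0 big_ord0. Qed.

Lemma skmulDl p q s : sm (p + q) s = sm p s + sm q s.
Proof.
set N := maxn (size p) (size q).
rewrite (@skmulE_bound N _ s (size_polyD p q)) (@skmulE_bound N p s (leq_maxl _ _)).
rewrite (@skmulE_bound N q s (leq_maxr _ _)) -big_split.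
by apply: eq_bigr => i _; rewrite coefD scalerDl.
Qed.

Lemma skmulZl c p q : sm (c *: p) q = c *: sm p q.
Proof.
rewrite (@skmulE_bound (size p) _ q (size_scale_leq c p)) (@skmulE_bound (size p) p q (leqnn _)).
by rewrite scaler_sumr; apply: eq_bigr => i _; rewrite coefZ scalerA.
Qed.

Lemma skmul_suml I (r : seq I) (P : pred I) (f : I -> {poly F}) q :
  sm (\sum_(i <- r | P i) f i) q = \sum_(i <- r | P i) sm (f i) q.
Proof. exact: (big_morph (sm^~ q) (fun p1 p2 => skmulDl p1 p2 q) (skmul0l q)). Qed.

Lemma skmulXn j q : sm 'X^j q = iter j sX q.
Proof.
rewrite (@skmulE_bound j.+1 _ q (eq_leq (size_polyXn F j))) big_ord_recr /= coefXn eqxx scale1r.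
by rewrite big1 ?add0r // => i _; rewrite coefXn (ltn_eqF (ltn_ord i)) scale0r.
Qed.

Lemma skmul1l q : sm 1 q = q.
Proof. by rewrite -(expr0 'X) skmulXn. Qed.

Lemma skmulr1 p : sm p 1 = p.
Proof.
have iterX i : iter i sX 1 = 'X^i by elim: i => //= i ->; rewrite skX_Xn.
by rewrite /skmul; under eq_bigr do rewrite iterX; rewrite -poly_def coefK.
Qed.

Lemma skX_skmul q s : sX (sm q s) = sm (sX q) s.
Proof.
rewrite (@skmulE_bound (size q).+1 _ s (size_skX_leq q)) /skmul skX_sum.
under eq_bigr do rewrite skXZ.
under [RHS]eq_bigr do rewrite coef_skX scalerDl.
rewrite !big_split /= big_ord_recl [X in _ = _ + X]big_ord_recr /= nth_default //.
rewrite delta0 !scale0r add0r addr0.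
by congr (_ + _); apply: eq_bigr => i _; rewrite lift0.
Qed.

Lemma skmulA p q s : sm (sm p q) s = sm p (sm q s).
Proof.
have iter_skmul i : iter i sX (sm q s) = sm (iter i sX q) s.
  by elim: i => //= i ->; rewrite skX_skmul.
rewrite [sm p q]/skmul skmul_suml [RHS]/skmul.
by apply: eq_bigr => i _; rewrite skmulZl iter_skmul.
Qed.

Lemma sigma_eq0 c : sigma c = 0 -> c = 0.
Proof.
move=> h; case: (eqVneq c 0) => // /hF /(rmorph_unit sigma).
by rewrite h unitr0.
Qed.

Lemma iter_sigma_eq0 k c : iter k sigma c = 0 -> c = 0.
Proof. by elim: k => //= k IH /sigma_eq0 /IH. Qed.

Lemma iter_sigma1 k : iter k sigma 1 = 1.
Proof. by elim: k => //= k ->; rewrite rmorph1. Qed.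

Lemma divring_mulf_neq0 a b : a != 0 -> b != 0 -> a * b != 0.
Proof. by move=> /hF a_unit; apply: contra => /eqP ab0; rewrite -(mulKr a_unit b) ab0 mulr0. Qed.

Lemma size_sum_leq I (r : seq I) (P : pred I) (f : I -> {poly F}) m :
  (forall i, P i -> (size (f i) <= m)%N) -> (size (\sum_(i <- r | P i) f i)%R <= m)%N.
Proof.
move=> h; apply: (big_ind (fun x : {poly F} => size x <= m)%N) => //; first by rewrite size_poly0.
by move=> x y hx hy; apply: leq_trans (size_polyD x y) _; rewrite geq_max hx hy.
Qed.

Lemma size_leq_coef (p : {poly F}) d : (size p <= d.+1)%N -> p`_d = 0 -> (size p <= d)%N.
Proof.
move=> hp pd; apply/leq_sizeP => k; rewrite leq_eqVlt => /orP [/eqP <- //|hk].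
exact: nth_default (leq_trans hp hk).
Qed.

Lemma size_lead_skX p : p != 0 ->
  size (sX p) = (size p).+1 /\ lead_coef (sX p) = sigma (lead_coef p).
Proof.
move=> pn0; have sp : size p = (size p).-1.+1 by rewrite prednK // size_poly_gt0.
have top : (sX p)`_(size p) = sigma (lead_coef p).
  by rewrite coef_skX {1}sp (nth_default _ (leqnn _)) delta0 addr0.
have top_neq0 : (sX p)`_(size p) != 0.
  by rewrite top; apply: contra pn0 => /eqP /sigma_eq0 /eqP; rewrite lead_coef_eq0.
have size_sXp : size (sX p) = (size p).+1.
  apply/eqP; rewrite eqn_leq size_skX_leq ltnNge; apply: contra top_neq0 => h.
  by rewrite nth_default.
by rewrite lead_coefE size_sXp.
Qed.

Lemma size_lead_iter_skX k p : p != 0 ->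
  size (iter k sX p) = (size p + k)%N /\ lead_coef (iter k sX p) = iter k sigma (lead_coef p).
Proof.
move=> pn0; elim: k => [|k [IH1 IH2]] /=; first by rewrite addn0.
have nz : iter k sX p != 0 by rewrite -size_poly_gt0 IH1 addn_gt0 size_poly_gt0 pn0.
by have [-> ->] := size_lead_skX nz; rewrite IH1 IH2 addnS.
Qed.

Lemma size_lead_skmul p q : p != 0 -> q != 0 ->
  size (sm p q) = (size p + size q).-1 /\
  lead_coef (sm p q) = lead_coef p * iter (size p).-1 sigma (lead_coef q).
Proof.
move=> pn0 qn0; set d := (size p).-1.
have sp : size p = d.+1 by rewrite prednK // size_poly_gt0.
rewrite (@skmulE_bound d.+1 p q (eq_leq sp)) big_ord_recr /=.
have [size_top lead_top] := size_lead_iter_skX d qn0.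
have pd_reg : GRing.lreg p`_d.
  by apply/mulrI/hF; move: pn0; rewrite -lead_coef_eq0 lead_coefE.
have size_rest : (size (\sum_(i < d) p`_i *: iter i sX q)%R < size q + d)%N.
  case: d {sp pd_reg size_top lead_top} => [|d].
    by rewrite big_ord0 size_poly0 addn0 size_poly_gt0.
  rewrite addnS ltnS; apply: size_sum_leq => i _; apply: leq_trans (size_scale_leq _ _) _.
  by have [-> _] := size_lead_iter_skX i qn0; rewrite leq_add2l -ltnS.
rewrite addrC size_polyDl ?lreg_size ?size_top // addrC lead_coefDr ?lreg_size ?size_top //.
by split; [rewrite sp addSn addnC | rewrite lead_coef_lreg // lead_top lead_coefE].
Qed.

Lemma skmul_neq0 p q : p != 0 -> q != 0 -> sm p q != 0.
Proof.
move=> pn0 qn0; rewrite -lead_coef_eq0; have [_ ->] := size_lead_skmul pn0 qn0.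
rewrite -lead_coef_eq0 in pn0; rewrite -lead_coef_eq0 in qn0.
by rewrite divring_mulf_neq0 //; apply: contra qn0 => /eqP /iter_sigma_eq0 ->.
Qed.

Lemma size_skmul p q : p != 0 -> q != 0 ->
  ((size (sm p q)).-1 = (size p).-1 + (size q).-1)%N.
Proof.
move=> pn0 qn0; have [-> _] := size_lead_skmul pn0 qn0.
by move: pn0 qn0; rewrite -!size_poly_gt0; lia.
Qed.

Lemma skexp_XsubC b m : skexp ('X - b%:P) m \is monic /\ size (skexp ('X - b%:P) m) = m.+1.
Proof.
elim: m => [|m [IH1 IH2]]; first by rewrite /= monic1 size_poly1.
have -> : skexp ('X - b%:P) m.+1 = sm ('X - b%:P) (skexp ('X - b%:P) m) by [].
rewrite monicE; have [-> ->] := size_lead_skmul (monic_neq0 (monicXsubC b)) (monic_neq0 IH1).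
rewrite size_XsubC IH2 (eqP (monicXsubC b)) (eqP IH1) iter_sigma1 mul1r.
by split.
Qed.

Lemma skexpD p m k : skexp p (m + k) = sm (skexp p m) (skexp p k).
Proof. by elim: m => [|m IH]; rewrite /= ?skmul1l // IH skmulA. Qed.

Lemma skexp1 p : skexp p 1 = p.
Proof. exact: skmulr1. Qed.

Lemma skew_right_division (T A : {poly F}) : T \is monic ->
  exists D rho, A = sm D T + rho /\ (size rho < size T)%N.
Proof.
move=> Tm; have Tn0 := monic_neq0 Tm.
elim: {A}(size A) {-2}A (leqnn (size A)) => [|m IH] A hA.
  exists 0, A; rewrite skmul0l add0r; split=> //.
  by move/size_poly_leq0P: hA ->; rewrite size_poly0 size_poly_gt0.
have [small|hm] := ltnP (size A) (size T); first by exists 0, A; rewrite skmul0l add0r.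
have [|geA] := ltnP (size A) m.+1; first exact: IH.
have {geA}sizeA : size A = m.+1 by apply/eqP; rewrite eqn_leq hA geA.
(* Cancel the leading term of A with (lead_coef A) x^k T, k = deg A - deg T. *)
set k := (m.+1 - size T)%N.
have [size_xkT lead_xkT] := size_lead_iter_skX k Tn0.
rewrite subnKC -sizeA // in size_xkT.
rewrite (eqP Tm) iter_sigma1 in lead_xkT.
set B := lead_coef A *: iter k sX T.
have size_AB : (size (A - B)%R <= m)%N.
  apply: size_leq_coef.
    rewrite -sizeA (leq_trans (size_polyD _ _)) // size_polyN geq_max leqnn.
    by rewrite (leq_trans (size_scale_leq _ _)) ?size_xkT.
  have xkT_m : (iter k sX T)`_m = 1 by rewrite -lead_xkT lead_coefE size_xkT sizeA.
  by rewrite coefB coefZ xkT_m mulr1 lead_coefE sizeA subrr.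
have [D [rho [eA rho_small]]] := IH _ size_AB.
exists (lead_coef A *: 'X^k + D), rho; split => //.
by rewrite skmulDl skmulZl skmulXn -/B -addrA -eA addrC subrK.
Qed.
Definition left_dependent k (v : 'I_k -> {poly F}) :=
  exists2 c : 'I_k -> F, (exists j, c j != 0) & \sum_j c j *: v j = 0.

(* Gaussian elimination step: a dependence among the v (lift j0 i) - m i v j0
   yields one among the v j. *)
Lemma left_dependent_lift d (v : 'I_d.+2 -> {poly F}) j0 (m : 'I_d.+1 -> F) :
  left_dependent (fun i => v (lift j0 i) - m i *: v j0) -> left_dependent v.
Proof.
case=> c [i0 ci0] hc.
have unliftK i : unlift j0 (lift j0 i) = Some i := liftK j0 i.
exists (fun j => if unlift j0 j is Some i then c i else - \sum_i c i * m i).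
  by exists (lift j0 i0) => /=; rewrite unliftK.
rewrite (bigD1_ord j0) //= unlift_none.
rewrite (eq_bigr (fun i => c i *: v (lift j0 i))); last by move=> i _; rewrite (unliftK i).
move: hc; rewrite (eq_bigr (fun i => c i *: v (lift j0 i) - (c i * m i) *: v j0)); last first.
  by move=> i _; rewrite scalerBr scalerA.
by rewrite sumrB -scaler_suml => /subr0_eq ->; rewrite scaleNr addNr.
Qed.

(* Any d + 1 polynomials of size at most d are left linearly dependent:
   eliminate the coefficient of x^(d-1) against a pivot and induct on d. *)
Lemma poly_left_dependent d (v : 'I_d.+1 -> {poly F}) :
  (forall j, (size (v j) <= d)%N) -> left_dependent v.
Proof.
elim: d v => [|d IH] v hv.
  exists (fun=> 1); first by exists ord0; rewrite oner_neq0.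
  by rewrite big1 // => j _; move/size_poly_leq0P: (hv j) ->; rewrite scaler0.
have [j0 pivot] : exists j0, forall j, (v j)`_d = (v j)`_d / (v j0)`_d * (v j0)`_d.
  case: (pickP (fun j => (v j)`_d != 0)) => [j0 nz|zero].
    by exists j0 => j; rewrite divrK //; exact: hF.
  by exists ord0 => j; move/negbFE/eqP: (zero j) ->; rewrite !mul0r.
pose m i := (v (lift j0 i))`_d / (v j0)`_d.
apply: (@left_dependent_lift _ _ j0 m); apply: IH => i.
apply: size_leq_coef.
  apply: leq_trans (size_polyD _ _) _.
  by rewrite size_polyN geq_max hv (leq_trans (size_scale_leq _ _)).
by rewrite coefB coefZ -pivot subrr.
Qed.

(* The deg T + 1 remainders
   of x^j * U modulo T live in a space of dimension deg T. *)
Lemma left_ore_monic (T U : {poly F}) : T \is monic ->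
  exists R S : {poly F}, [/\ R != 0, ((size R).-1 <= (size T).-1)%N & sm R U = sm S T].
Proof.
move=> Tm; set d := (size T).-1.
have sizeT : size T = d.+1 by rewrite prednK // size_poly_gt0 monic_neq0.
have div_xjU (j : 'I_d.+1) : exists DR : {poly F} * {poly F},
    iter j sX U = sm DR.1 T + DR.2 /\ (size DR.2 <= d)%N.
  have [D [rho [e small]]] := skew_right_division (iter j sX U) Tm.
  by exists (D, rho); split => //; rewrite -ltnS -sizeT.
have [DR hDR] := fin_all_exists div_xjU.
have [c [j0 cj0] hc] := poly_left_dependent (fun j => (hDR j).2).
pose R := \poly_(j < d.+1) c (inord j).
have coefR (j : 'I_d.+1) : R`_j = c j by rewrite coef_poly ltn_ord inord_val.
exists R, (\sum_j c j *: (DR j).1); split.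
- by apply: contraNneq cj0 => R0; rewrite -coefR R0 coef0.
- by rewrite -subn1 leq_subLR add1n size_poly.
- rewrite (@skmulE_bound d.+1 _ _ (size_poly _ _)) skmul_suml.
  under eq_bigr do rewrite coefR (hDR _).1 scalerDr.
  by rewrite big_split /= hc addr0; apply: eq_bigr => j _; rewrite skmulZl.
Qed.

Lemma common_left_multiple (X : eqType) (xs : seq X) (U T : X -> {poly F}) :
  (forall x, T x \is monic) ->
  exists R : {poly F}, [/\ R != 0, ((size R).-1 <= \sum_(x <- xs) (size (T x)).-1)%N &
    forall x, x \in xs -> exists S, sm R (U x) = sm S (T x)].
Proof.
move=> Tmonic; elim: xs => [|x xs [R0 [R0n R0size R0mul]]].
  by exists 1; split=> //; [exact: oner_neq0 | rewrite size_poly1].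
have [R' [S' [R'n R'size eR']]] := left_ore_monic (sm R0 (U x)) (Tmonic x).
exists (sm R' R0); split; first exact: skmul_neq0.
  by rewrite size_skmul // big_cons; apply: leq_add.
move=> y; rewrite in_cons => /predU1P [->|yxs]; first by exists S'; rewrite skmulA.
by have [S0 e0] := R0mul y yxs; exists (sm R' S0); rewrite skmulA e0 skmulA.
Qed.

Lemma common_left_multiple1 (X : eqType) (xs : seq X) (T : X -> {poly F}) :
  (forall x, T x \is monic) ->
  exists R : {poly F}, [/\ R != 0, ((size R).-1 <= \sum_(x <- xs) (size (T x)).-1)%N &
    forall x, x \in xs -> skrdvd (T x) R].
Proof.
move=> Tmonic; have [R [Rn0 Rsize RT]] := common_left_multiple xs (fun=> 1) Tmonic.
by exists R; split=> // x /RT [S eS]; exists S; rewrite -eS skmulr1.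
Qed.

Section Families.
Variable n : nat.
Implicit Types T V W : 'I_n -> {poly F}.

Definition deg_sum T : nat := \sum_i (size (T i)).-1.

Definition cmult_lower_bound T (N : nat) : Prop :=
  forall Q, Q != 0 -> (forall i, skrdvd (T i) Q) -> (N <= (size Q).-1)%N.

Lemma inI_imfset T Q : inI sigma delta [fset T i | i : 'I_n]%fset Q <-> forall i, skrdvd (T i) Q.
Proof.
split=> [QI i | QT P /imfsetP [/= i _ ->] //]; apply: QI.
by apply/imfsetP; exists i.
Qed.

Lemma Pindependent_lower_bound T : injective T ->
  Pindependent sigma delta [fset T i | i : 'I_n]%fset -> cmult_lower_bound T (deg_sum T).
Proof.
move=> Tinj [_ [G [[_ _ Gmin] sizeG]]] Q Qn0 QT.
rewrite /deg_sum -(sum_imfset_ord (fun P : {poly F} => (size P).-1) Tinj) -sizeG.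
by rewrite -!subn1 leq_sub2r // Gmin // inI_imfset.
Qed.

(* Conversely, for monic families without repetitions the lower bound is P-independence:
   a common left multiple of degree at most deg_sum T always exists. *)
Lemma lower_bound_Pindependent T : (forall i, T i \is monic) -> injective T ->
  cmult_lower_bound T (deg_sum T) -> Pindependent sigma delta [fset T i | i : 'I_n]%fset.
Proof.
move=> Tmonic Tinj bound.
have [R [Rn0 Rsize RT]] := common_left_multiple1 (index_enum 'I_n) Tmonic.
have {}RT i : skrdvd (T i) R by apply: RT; rewrite mem_index_enum.
have sizeR : (size R).-1 = deg_sum T by apply/eqP; rewrite eqn_leq Rsize bound.
have lreg_inv : GRing.lreg (lead_coef R)^-1 by apply/mulrI; rewrite unitrV hF ?lead_coef_eq0.
split; first by exists R; split=> //; apply/inI_imfset.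
exists ((lead_coef R)^-1 *: R); split; last first.
  by rewrite lreg_size // sizeR (sum_imfset_ord (fun P : {poly F} => (size P).-1) Tinj).
split.
- by rewrite monicE lead_coef_lreg // mulVr // hF ?lead_coef_eq0.
- apply/inI_imfset => i; have [S eS] := RT i.
  by exists ((lead_coef R)^-1 *: S); rewrite skmulZl -eS.
- move=> Q Qn0 /inI_imfset QT; rewrite lreg_size //.
  by have := bound Q Qn0 QT; move: Rn0 Qn0; rewrite -sizeR -!size_poly_gt0; lia.
Qed.

(* The lower bound forbids repetitions among members of positive degree: dropping a
   repeated member leaves the same left ideal but decreases the total degree. *)
Lemma lower_bound_injective T : (forall i, T i \is monic) ->
  (forall i, 0 < (size (T i)).-1)%N -> cmult_lower_bound T (deg_sum T) -> injective T.
Proof.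
move=> Tmonic Tdeg bound i j Tij; apply/eqP/negPn/negP => nij.
have [R [Rn0 Rsize RT]] := common_left_multiple1 [seq k <- index_enum 'I_n | k != j] Tmonic.
have RTall k : skrdvd (T k) R.
  have [->|nkj] := eqVneq k j; first rewrite -Tij.
    by apply: RT; rewrite mem_filter nij mem_index_enum.
  by apply: RT; rewrite mem_filter nkj mem_index_enum.
have := leq_trans (bound R Rn0 RTall) Rsize.
rewrite big_filter /deg_sum (bigD1 j) //= -[X in (_ <= X)%N]add0n leq_add2r.
by rewrite leqNgt Tdeg.
Qed.

Lemma lower_bound_right_factor T V W N : (forall i, V i \is monic) ->
  (forall i, T i = sm (V i) (W i)) ->
  cmult_lower_bound T (deg_sum V + N) -> cmult_lower_bound W N.
Proof.
move=> Vmonic TVW bound Q Qn0 QW.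
have [U eU] := fin_all_exists QW.
have [R [Rn0 Rsize RVU]] := common_left_multiple (index_enum 'I_n) U Vmonic.
have RQ_T i : skrdvd (T i) (sm R Q).
  have [S eS] := RVU i (mem_index_enum i).
  by exists S; rewrite TVW -skmulA -eS skmulA -eU.
move: (bound _ (skmul_neq0 Rn0 Qn0) RQ_T); rewrite size_skmul //.
by move=> /leq_trans /(_ (leq_add Rsize (leqnn _))); rewrite leq_add2l.
Qed.

End Families.
End SkewPolynomials.

Theorem mainTheorem5 (F : unitRingType) (hF : is_division_ring F)
  (sigma : {rmorphism F -> F}) (delta : F -> F)
  (hdelta : is_sigma_derivation sigma delta)
  (n : nat) (a : 'I_n -> F) (r : 'I_n -> nat) (hr : forall i, (0 < r i)%N)
  (hsize : #|` [fset skexp sigma delta ('X - (a i)%:P) (r i) | i : 'I_n]%fset | = n) :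
  Pindependent sigma delta [fset skexp sigma delta ('X - (a i)%:P) (r i) | i : 'I_n]%fset ->
  (forall s : 'I_n -> nat, (forall i, 0 < s i <= r i)%N ->
     Pindependent sigma delta [fset skexp sigma delta ('X - (a i)%:P) (s i) | i : 'I_n]%fset)
  /\
  (#|` [fset a i | i : 'I_n]%fset | = n /\
   Pindependent_elts sigma delta [fset a i | i : 'I_n]%fset).
Proof.
move=> indep_r.
pose P (k : 'I_n -> nat) i := skexp sigma delta ('X - (a i)%:P) (k i).
have Pmonic k i : P k i \is monic by have [] := skexp_XsubC hF hdelta (a i) (k i).
have degP k i : (size (P k i)).-1 = k i by have [_ ->] := skexp_XsubC hF hdelta (a i) (k i).
have deg_sumP k : deg_sum (P k) = (\sum_i k i)%N by apply: eq_bigr => i _; rewrite degP.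
have bound_r := Pindependent_lower_bound (card_imfset_ord_inj hsize) indep_r.
have bound_s s : (forall i, 0 < s i <= r i)%N ->
    cmult_lower_bound sigma delta (P s) (deg_sum (P s)).
  move=> hs; have s_le_r i : (s i <= r i)%N by case/andP: (hs i).
  have sum_r : (deg_sum (P (fun i => r i - s i)%N) + deg_sum (P s) = deg_sum (P r))%N.
    by rewrite !deg_sumP -big_split; apply: eq_bigr => i _ /=; rewrite subnK.
  apply: (@lower_bound_right_factor _ hF _ _ hdelta _ (P r) (P (fun i => r i - s i)%N)) => [i|i|].
  - exact: Pmonic.
  - by rewrite /P -(skexpD hdelta) subnK.
  - by rewrite sum_r; exact: bound_r.
have inj_s s (hs : forall i, (0 < s i <= r i)%N) : injective (P s).
  apply: (lower_bound_injective hF hdelta) (bound_s s hs) => // i.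
  by rewrite degP; case/andP: (hs i).
have indep_s s (hs : forall i, (0 < s i <= r i)%N) :=
  lower_bound_Pindependent hF hdelta (Pmonic s) (inj_s s hs) (bound_s s hs).
have one_le_r i : (0 < 1 <= r i)%N by rewrite hr.
have P1 i : P (fun=> 1%N) i = 'X - (a i)%:P := skexp1 hdelta _.
have a_inj : injective a by move=> i j aij; apply: (inj_s _ one_le_r); rewrite !P1 aij.
split=> //; split; first exact: inj_card_imfset_ord.
rewrite /Pindependent_elts -imfset_comp.
have := indep_s _ one_le_r; congr Pindependent.
by apply: eq_imfset => [i|i]; rewrite ?P1.
Qed.
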